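(* Let $\tau\in(0,1)$, $C>\tau$, $\mu>0$, let $a:\mathbb{R}^+\to\mathbb{R}^+$ be continuous and bounded, $h(x)=\frac{x}{1+x}$, and $$d_1(t)=\mu\frac{t+C}{1-\tau},\qquad \beta(t)=\frac{t+C+1-\tau}{t+C}\Big(d_1(t)-\frac{1}{t+C}\Big).$$ Then the system $$x_1'(t)=-(a(t)+d_1(t))x_1(t)+a(t)x_2(t)+\beta(t)h(x_1(t-\tau)),\quad x_2'(t)=-(a(t)+d_1(t))x_2(t)+a(t)x_1(t)+\beta(t)h(x_2(t-\tau))$$ has the solution $x(t)=\big(\frac{1}{t+C},\frac{1}{t+C}\big)$, hence is not permanent, although $\beta(t)-d_1(t)\ge\mu/2$ for all sufficiently large $t$ (and $\beta$ is unbounded).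
   Context: Solutions are considered for $t\ge0$ with initial data on $[-\tau,0]$. *)

From Stdlib Require Import Reals Lra.
From Coquelicot Require Import Coquelicot.
Open Scope R_scope.

Definition hf (x : R) : R := x / (1 + x).

Definition d1f (mu tau C t : R) : R := mu * (t + C) / (1 - tau).

Definition betaf (mu tau C t : R) : R :=
  (t + C + 1 - tau) / (t + C) * (d1f mu tau C t - 1 / (t + C)).

Definition cont_within (D : R -> Prop) (f : R -> R) (t : R) : Prop :=
  filterlim f (within D (locally t)) (locally (f t)).

Definition is_solution (tau mu C : R) (a x1 x2 : R -> R) : Prop :=
  (forall t, -tau <= t <= 0 ->
     cont_within (fun s => -tau <= s <= 0) x1 t /\
     cont_within (fun s => -tau <= s <= 0) x2 t) /\
  cont_within (fun s => 0 <= s) x1 0 /\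
  cont_within (fun s => 0 <= s) x2 0 /\
  (forall t, 0 < t ->
     is_derive x1 t
       (- (a t + d1f mu tau C t) * x1 t + a t * x2 t
        + betaf mu tau C t * hf (x1 (t - tau))) /\
     is_derive x2 t
       (- (a t + d1f mu tau C t) * x2 t + a t * x1 t
        + betaf mu tau C t * hf (x2 (t - tau)))).

Definition admissible_solution (tau mu C : R) (a x1 x2 : R -> R) : Prop :=
  is_solution tau mu C a x1 x2 /\
  (forall s, -tau <= s <= 0 -> 0 <= x1 s /\ 0 <= x2 s) /\
  0 < x1 0 /\ 0 < x2 0.

Definition permanent (tau mu C : R) (a : R -> R) : Prop :=
  exists m M, 0 < m /\ m <= M /\
    forall x1 x2, admissible_solution tau mu C a x1 x2 ->
      exists T, forall t, T <= t ->
        m <= x1 t <= M /\ m <= x2 t <= M.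

(* The parameters are tuned so that u(t) = 1/(t+C) solves both equations: the
   coupling terms a(t)(x_2 - x_1) cancel on the diagonal, and with
   h(u(t-tau)) = 1/(t+C+1-tau) the birth term beta(t) h(u(t-tau)) equals
   d_1(t) u(t) - u(t)^2, so the right-hand side reduces to -u(t)^2 = u'(t).  Since this solution
   tends to 0, no positive lower bound m can hold eventually, so the system is
   not permanent.  Finally the closed form
     beta(t) - d_1(t) = mu - (t+C+1-tau)/(t+C)^2
   shows beta - d_1 >= mu/2 for t >= 4/mu + 1, hence beta >= d_1 grows without
   bound. *)

From Stdlib Require Import Reals Lra.
From Coquelicot Require Import Coquelicot.
Open Scope R_scope.

Lemma reciprocal_cont_within (D : R -> Prop) (c t : R) : 0 < t + c ->
  cont_within D (fun s => 1 / (s + c)) t.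
Proof.
  intros Htc; unfold cont_within.
  eapply filterlim_filter_le_1; [apply filter_le_within|].
  apply (ex_derive_continuous (K := R_AbsRing) (V := R_NormedModule)
           (fun s => 1 / (s + c))).
  auto_derive; lra.
Qed.

Lemma reciprocal_rhs (tau mu C : R) (a t : R) :
  0 < tau < 1 -> tau < C -> 0 < t ->
  - (a + d1f mu tau C t) * (1 / (t + C)) + a * (1 / (t + C))
    + betaf mu tau C t * hf (1 / (t - tau + C)) = - (1 / ((t + C) * (t + C))).
Proof.
  intros Htau HC Ht; unfold hf, betaf, d1f; field; repeat split; lra.
Qed.

Lemma reciprocal_admissible (tau mu C : R) (a : R -> R) :
  0 < tau < 1 -> tau < C ->
  admissible_solution tau mu C a (fun t => 1 / (t + C)) (fun t => 1 / (t + C)).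
Proof.
  intros Htau HC.
  assert (Hderiv : forall t, 0 < t ->
    is_derive (fun s => 1 / (s + C)) t
      (- (a t + d1f mu tau C t) * (1 / (t + C)) + a t * (1 / (t + C))
       + betaf mu tau C t * hf (1 / (t - tau + C)))).
  { intros t Ht; rewrite reciprocal_rhs by lra.
    auto_derive; [lra | field; lra]. }
  split; [split; [|split; [|split]] | split].
  - intros t Ht; split; apply reciprocal_cont_within; lra.
  - apply reciprocal_cont_within; lra.
  - apply reciprocal_cont_within; lra.
  - intros t Ht; split; apply Hderiv; exact Ht.
  - intros s Hs; split; left; apply Rdiv_lt_0_compat; lra.
  - split; apply Rdiv_lt_0_compat; lra.
Qed.

Lemma reciprocal_not_eventually_bounded_below (C m T : R) : 0 < m ->
  exists t, T <= t /\ 1 / (t + C) < m.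
Proof.
  intros Hm.
  exists (Rmax T (1 / m - C + 1)); split; [apply Rmax_l|].
  assert (Hbig : 1 / m < Rmax T (1 / m - C + 1) + C)
    by (generalize (Rmax_r T (1 / m - C + 1)); lra).
  assert (Hinv : 0 < 1 / m) by (apply Rdiv_lt_0_compat; lra).
  apply (Rmult_lt_reg_r (Rmax T (1 / m - C + 1) + C)); [lra|].
  replace (1 / (Rmax T (1 / m - C + 1) + C) * (Rmax T (1 / m - C + 1) + C))
    with 1 by (field; lra).
  apply (Rmult_lt_compat_l m) in Hbig; [|exact Hm].
  replace (m * (1 / m)) with 1 in Hbig by (field; lra); exact Hbig.
Qed.

Lemma not_permanent_of_vanishing_solution (tau mu C : R) (a x1 x2 : R -> R) :
  admissible_solution tau mu C a x1 x2 ->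
  (forall m T, 0 < m -> exists t, T <= t /\ x1 t < m) ->
  ~ permanent tau mu C a.
Proof.
  intros Hadm Hvanish [m [M [Hm [_ Hperm]]]].
  destruct (Hperm x1 x2 Hadm) as [T HT].
  destruct (Hvanish m T Hm) as [t [Ht Hsmall]].
  destruct (HT t Ht) as [[Hlow _] _]; lra.
Qed.

Lemma beta_minus_d1 (mu tau C t : R) : tau < 1 -> 0 < t + C ->
  betaf mu tau C t - d1f mu tau C t
  = mu - (t + C + 1 - tau) / ((t + C) * (t + C)).
Proof. intros Htau Htc; unfold betaf, d1f; field; lra. Qed.

(* beta - d_1 >= mu/2 as soon as t + C >= max(1, 4/mu), in particular for
   t >= 4/mu + 1. *)
Lemma beta_minus_d1_large (mu tau C t : R) :
  0 < tau < 1 -> 0 < C -> 0 < mu -> 4 / mu + 1 <= t ->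
  mu / 2 <= betaf mu tau C t - d1f mu tau C t.
Proof.
  intros Htau HC Hmu Ht.
  assert (H4 : 0 < 4 / mu) by (apply Rdiv_lt_0_compat; lra).
  rewrite beta_minus_d1 by lra.
  set (u := t + C).
  assert (Hu1 : 1 <= u) by (unfold u; lra).
  assert (Hmuu : 4 <= mu * u).
  { assert (Hu : 4 / mu <= u) by (unfold u; lra).
    apply (Rmult_le_compat_l mu) in Hu; [|lra].
    replace (mu * (4 / mu)) with 4 in Hu by (field; lra); exact Hu. }
  assert (Hfrac : (u + 1 - tau) / (u * u) <= mu / 2).
  { apply (Rmult_le_reg_r (u * u)); [nra|].
    replace ((u + 1 - tau) / (u * u) * (u * u)) with (u + 1 - tau)
      by (field; lra).
    nra. }
  lra.
Qed.

Lemma d1_ge_linear (mu tau C t : R) :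
  0 < tau < 1 -> 0 < mu -> 0 < t + C -> mu * (t + C) <= d1f mu tau C t.
Proof.
  intros Htau Hmu Htc; unfold d1f.
  apply (Rmult_le_reg_r (1 - tau)); [lra|].
  replace (mu * (t + C) / (1 - tau) * (1 - tau)) with (mu * (t + C))
    by (field; lra).
  assert (0 < mu * (t + C)) by (apply Rmult_lt_0_compat; lra); nra.
Qed.

(* beta is unbounded above on [0, +oo): beta >= d_1 + mu/2 >= mu t eventually. *)
Lemma beta_unbounded (mu tau C : R) :
  0 < tau < 1 -> 0 < C -> 0 < mu ->
  forall K, exists t, 0 <= t /\ K < betaf mu tau C t.
Proof.
  intros Htau HC Hmu K.
  set (t := Rmax (4 / mu + 1) (Rabs K / mu + 1)).
  assert (H4 : 0 < 4 / mu) by (apply Rdiv_lt_0_compat; lra).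
  assert (Ht1 : 4 / mu + 1 <= t) by apply Rmax_l.
  assert (Ht2 : Rabs K / mu + 1 <= t) by apply Rmax_r.
  exists t; split; [lra|].
  assert (Hgap := beta_minus_d1_large mu tau C t Htau HC Hmu Ht1).
  assert (Hd := d1_ge_linear mu tau C t Htau Hmu ltac:(lra)).
  assert (HK : Rabs K < mu * t).
  { apply (Rmult_le_compat_l mu) in Ht2; [|lra].
    replace (mu * (Rabs K / mu + 1)) with (Rabs K + mu) in Ht2
      by (field; lra).
    lra. }
  generalize (Rle_abs K); nra.
Qed.

Theorem mainTheorem11 (tau C mu : R) (a : R -> R)
  (Htau : 0 < tau < 1) (HC : tau < C) (Hmu : 0 < mu)
  (Ha_pos : forall t, 0 <= t -> 0 <= a t)
  (Ha_cont : forall t, 0 <= t -> cont_within (fun s => 0 <= s) a t)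
  (Ha_bdd : exists K, forall t, 0 <= t -> a t <= K) :
  admissible_solution tau mu C a (fun t => 1 / (t + C)) (fun t => 1 / (t + C)) /\
  ~ permanent tau mu C a /\
  (exists T, forall t, T <= t -> mu / 2 <= betaf mu tau C t - d1f mu tau C t) /\
  (forall K, exists t, 0 <= t /\ K < betaf mu tau C t).
Proof.
  assert (Hadm := reciprocal_admissible tau mu C a Htau HC).
  split; [exact Hadm|split; [|split]].
  - apply (not_permanent_of_vanishing_solution _ _ _ _ _ _ Hadm).
    intros m T Hm; exact (reciprocal_not_eventually_bounded_below C m T Hm).
  - exists (4 / mu + 1); intros t Ht.
    apply beta_minus_d1_large; lra.
  - apply beta_unbounded; lra.
Qed.
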